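(* Suppose A1–A3 and A4' hold and let $\{x_k\}$ be generated by Algorithm 1. Let $k_1=n_0(\kappa_c/2)$, where for $\delta>0$, $n_0(\delta)=\min\{n\in\mathbb{N}:\ \nu_k\le\delta\|\nabla f(x_k)\|^2\ \text{for all } k\ge n\}$ (well defined by A4'). Then for every $\epsilon>0$ the set $\Omega_\epsilon=\{k\in\mathbb{N}:\ \|\nabla f(x_k)\|>\epsilon\}$ is finite and $$|\Omega_\epsilon|\le k_1+\left[\frac{2\left(f(x_0)-f_{low}+\sum_{i=0}^{k_1-1}\nu_i\right)}{\kappa_c}\right]\epsilon^{-2}.$$
   Context: Let $(X,\langle\cdot,\cdot\rangle)$ be a real Hilbert space with induced norm $\|\cdot\|$, and $f:X\to\mathbb{R}$ Fréchet differentiable with gradient $\nabla f$. Algorithm 1 (general non-monotone descent algorithm): parameters $x_0\in X$, $\alpha_0>0$, $\beta,\rho\in(0,1)$. For $k=0,1,2,\dots$: choose $d_k\in X$ with $\langle\nabla f(x_k),d_k\rangle<0$; then for $l=0,1,2,\dots$ choose a number $\nu_{k,l}\ge 0$ and test $$f(x_k+\alpha_k\beta^l d_k)\le f(x_k)+\rho\alpha_k\beta^l\langle\nabla f(x_k),d_k\rangle+\nu_{k,l};$$ let $l_k$ be the first $l$ for which this holds, set $\nu_k:=\nu_{k,l_k}$, $x_{k+1}=x_k+\alpha_k\beta^{l_k}d_k$ and $\alpha_{k+1}=\alpha_k\beta^{l_k-1}$. It is assumed the algorithm generates infinite sequences (all $l_k$ finite). Assumptions: A1: $\nabla f$ is Lipschitz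 continuous with constant $L>0$. A2: there is $f_{low}\in\mathbb{R}$ with $f(x)\ge f_{low}$ for all $x\in X$. A3: there are constants $c_1,c_2>0$ with $\langle\nabla f(x_k),d_k\rangle\le -c_1\|\nabla f(x_k)\|^2$ and $\|d_k\|\le c_2\|\nabla f(x_k)\|$ for all $k$. A4': $\nu_k=o(\|\nabla f(x_k)\|^2)$, i.e. for every $\delta>0$ there is $n\in\mathbb{N}$ with $\nu_k\le\delta\|\nabla f(x_k)\|^2$ for all $k\ge n$. Constant: $\kappa_c=\min\left\{\rho\beta\alpha_0c_1,\ \frac{2\beta\rho(1-\rho)c_1^2}{Lc_2^2}\right\}$. *)

From Stdlib Require Import Reals Lra Lia List.
Open Scope R_scope.

Record RealHilbert := {
  hcar :> Type;
  hadd : hcar -> hcar -> hcar;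
  hopp : hcar -> hcar;
  hzero : hcar;
  hscal : R -> hcar -> hcar;
  hinner : hcar -> hcar -> R;
  hadd_assoc : forall x y z, hadd x (hadd y z) = hadd (hadd x y) z;
  hadd_comm : forall x y, hadd x y = hadd y x;
  hadd_0 : forall x, hadd x hzero = x;
  hadd_opp : forall x, hadd x (hopp x) = hzero;
  hscal_assoc : forall a b x, hscal a (hscal b x) = hscal (a * b) x;
  hscal_1 : forall x, hscal 1 x = x;
  hscal_distr_l : forall a x y, hscal a (hadd x y) = hadd (hscal a x) (hscal a y);
  hscal_distr_r : forall a b x, hscal (a + b) x = hadd (hscal a x) (hscal b x);
  hinner_sym : forall x y, hinner x y = hinner y x;
  hinner_add_l : forall x y z, hinner (hadd x y) z = hinner x z + hinner y z;
  hinner_scal_l : forall a x y, hinner (hscal a x) y = a * hinner x y;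
  hinner_pos : forall x, 0 <= hinner x x;
  hinner_def : forall x, hinner x x = 0 -> x = hzero;
  hcomplete : forall u : nat -> hcar,
    (forall eps, eps > 0 -> exists N, forall m n, (m >= N)%nat -> (n >= N)%nat ->
        sqrt (hinner (hadd (u m) (hopp (u n))) (hadd (u m) (hopp (u n)))) < eps) ->
    exists l, forall eps, eps > 0 -> exists N, forall n, (n >= N)%nat ->
        sqrt (hinner (hadd (u n) (hopp l)) (hadd (u n) (hopp l))) < eps
}.

Arguments hadd {_}. Arguments hopp {_}. Arguments hzero {_}.
Arguments hscal {_}. Arguments hinner {_}.

Definition hnorm {X : RealHilbert} (x : X) : R := sqrt (hinner x x).
Definition hsub {X : RealHilbert} (x y : X) : X := hadd x (hopp y).

Definition frechet_grad {X : RealHilbert} (f : X -> R) (g : X -> X) : Prop :=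
  forall x eps, eps > 0 -> exists delta, delta > 0 /\
    forall h : X, 0 < hnorm h < delta ->
      Rabs (f (hadd x h) - f x - hinner (g x) h) <= eps * hnorm h.

Fixpoint sum_lt (u : nat -> R) (n : nat) : R :=
  match n with
  | O => 0
  | S m => sum_lt u m + u m
  end.

Definition nm_test {X : RealHilbert} (f : X -> R) (g : X -> X) (rho beta : R)
  (xk dk : X) (ak : R) (nukl : R) (l : nat) : Prop :=
  f (hadd xk (hscal (ak * beta ^ l) dk))
    <= f xk + rho * ak * beta ^ l * hinner (g xk) dk + nukl.

Definition algorithm1 {X : RealHilbert} (f : X -> R) (g : X -> X)
  (alpha0 beta rho : R) (x : nat -> X) (alpha : nat -> R) (d : nat -> X)
  (nu : nat -> nat -> R) (lk : nat -> nat) : Prop :=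
  alpha0 > 0 /\ 0 < beta < 1 /\ 0 < rho < 1 /\
  alpha 0%nat = alpha0 /\
  (forall k, hinner (g (x k)) (d k) < 0) /\
  (forall k l, 0 <= nu k l) /\
  (forall k, nm_test f g rho beta (x k) (d k) (alpha k) (nu k (lk k)) (lk k)) /\
  (forall k l, (l < lk k)%nat ->
      ~ nm_test f g rho beta (x k) (d k) (alpha k) (nu k l) l) /\
  (forall k, x (S k) = hadd (x k) (hscal (alpha k * beta ^ (lk k)) (d k))) /\
  (forall k, alpha (S k) = alpha k * powerRZ beta (Z.of_nat (lk k) - 1)).

Definition kappa_c (rho beta alpha0 c1 c2 L : R) : R :=
  Rmin (rho * beta * alpha0 * c1) (2 * beta * rho * (1 - rho) * c1 ^ 2 / (L * c2 ^ 2)).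

From Stdlib Require Import Reals Lra Lia List Classical.
Open Scope R_scope.

(* Any trial step t <= 2 (1 - rho) c1 / (L c2^2) passes the Armijo test by the
   descent lemma f(x + t d) <= f x + t <g x, d> + L t^2 |d|^2 / 2, so backtracking
   never goes below beta * min(alpha0, that bound) and each iteration gives
   f(x_{k+1}) <= f(x_k) - kappa_c |g(x_k)|^2 + nu_k.  From k1 on, nu_k eats at most
   half of this decrease, so every k >= k1 in Omega_eps lowers f by kappa_c eps^2 / 2,
   while f(x_{k1}) - f_low <= f(x_0) - f_low + sum_{i<k1} nu_i. *)

Section HilbertFacts.
Variable X : RealHilbert.

Lemma hscal_0_l (u : X) : hscal 0 u = hzero.
Proof.
  assert (E : hscal 0 u = hadd (hscal 0 u) (hscal 0 u)).
  { rewrite <- hscal_distr_r. f_equal; ring. }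
  rewrite <- (hadd_opp _ (hscal 0 u)).
  rewrite E at 2. rewrite <- hadd_assoc, hadd_opp, hadd_0. reflexivity.
Qed.

Lemma hscal_0_r t : hscal t (@hzero X) = hzero.
Proof. rewrite <- (hscal_0_l hzero), hscal_assoc, Rmult_0_r. reflexivity. Qed.

Lemma hinner_0_r (u : X) : hinner u hzero = 0.
Proof. rewrite hinner_sym, <- (hscal_0_l hzero), hinner_scal_l. ring. Qed.

Lemma hinner_scal_r a (u v : X) : hinner u (hscal a v) = a * hinner u v.
Proof. rewrite hinner_sym, hinner_scal_l, hinner_sym. reflexivity. Qed.

Lemma hinner_add_r (u v w : X) : hinner w (hadd u v) = hinner w u + hinner w v.
Proof. rewrite hinner_sym, hinner_add_l, !(hinner_sym _ w). reflexivity. Qed.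

Lemma hopp_eq_scal (u : X) : hopp u = hscal (-1) u.
Proof.
  assert (E : hadd (hscal (-1) u) u = hzero).
  { rewrite <- (hscal_1 _ u) at 2. rewrite <- hscal_distr_r.
    replace (-1 + 1) with 0 by ring. apply hscal_0_l. }
  rewrite <- (hadd_0 _ (hopp u)), <- E, hadd_assoc,
    (hadd_comm _ (hopp u) (hscal (-1) u)), <- hadd_assoc,
    (hadd_comm _ (hopp u) u), hadd_opp, hadd_0.
  reflexivity.
Qed.

Lemma hinner_sub_l (u v w : X) : hinner (hsub u v) w = hinner u w - hinner v w.
Proof. unfold hsub. rewrite hinner_add_l, hopp_eq_scal, hinner_scal_l. ring. Qed.

Lemma hsub_hadd_l (u v : X) : hsub (hadd u v) u = v.
Proof.
  unfold hsub. rewrite (hadd_comm _ u v), <- hadd_assoc, hadd_opp, hadd_0.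
  reflexivity.
Qed.

Lemma hadd_scal_add (u v : X) s t :
  hadd u (hscal (s + t) v) = hadd (hadd u (hscal s v)) (hscal t v).
Proof. rewrite hscal_distr_r, hadd_assoc. reflexivity. Qed.

Lemma hnorm_ge0 (u : X) : 0 <= hnorm u.
Proof. apply sqrt_pos. Qed.

Lemma hnorm_sqr (u : X) : hnorm u ^ 2 = hinner u u.
Proof. unfold hnorm. rewrite <- Rsqr_pow2. apply Rsqr_sqrt, hinner_pos. Qed.

Lemma hnorm_eq0 (u : X) : hnorm u = 0 -> u = hzero.
Proof. intro H. apply hinner_def. rewrite <- hnorm_sqr, H. ring. Qed.

Lemma hnorm_scal t (u : X) : hnorm (hscal t u) = Rabs t * hnorm u.
Proof.
  unfold hnorm. rewrite hinner_scal_l, hinner_scal_r, <- Rmult_assoc,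
    sqrt_mult_alt, <- sqrt_Rsqr_abs by apply Rle_0_sqr.
  reflexivity.
Qed.

Lemma Cauchy_Schwarz (u v : X) : hinner u v <= hnorm u * hnorm v.
Proof.
  destruct (Req_dec (hinner v v) 0) as [Hv | Hv].
  { apply hinner_def in Hv. subst. rewrite hinner_0_r.
    apply Rmult_le_pos; apply hnorm_ge0. }
  set (a := hinner v v). set (b := hinner u v).
  assert (Ha : 0 < a) by (pose proof (hinner_pos _ v); unfold a in *; lra).
  (* expand 0 <= |a u - b v|^2 = a (a |u|^2 - b^2) *)
  assert (Hsq : b ^ 2 <= hinner u u * a).
  { pose proof (hinner_pos _ (hadd (hscal a u) (hscal (- b) v))) as P.
    rewrite !hinner_add_l, !hinner_add_r, !hinner_scal_l, !hinner_scal_r,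
      (hinner_sym _ v u) in P.
    fold a b in P. nra. }
  apply Rle_trans with (Rabs b); [apply Rle_abs |].
  rewrite <- (Rabs_pos_eq (hnorm u * hnorm v))
    by (apply Rmult_le_pos; apply hnorm_ge0).
  apply Rsqr_le_abs_0.
  rewrite Rsqr_mult, !Rsqr_pow2, !hnorm_sqr. exact Hsq.
Qed.

End HilbertFacts.

Lemma derivable_pt_lim_quadratic c e L s0 :
  derivable_pt_lim (fun s => s * c + L / 2 * s ^ 2 * e) s0 (c + L * s0 * e).
Proof.
  replace (c + L * s0 * e) with (1 * c + L / 2 * (INR 2 * s0 ^ (2 - 1)) * e)
    by (simpl; field).
  apply (derivable_pt_lim_plus (fun s => s * c) (fun s => L / 2 * s ^ 2 * e)).
  - apply (derivable_pt_lim_scal_right (fun s => s)), derivable_pt_lim_id.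
  - apply (derivable_pt_lim_scal_right (fun s => L / 2 * s ^ 2)).
    apply (derivable_pt_lim_scal (fun s => s ^ 2)), derivable_pt_lim_pow.
Qed.

Definition armijo_step_bound (rho c1 c2 L : R) : R := 2 * (1 - rho) * c1 / (L * c2 ^ 2).

Section LipschitzGradient.
Variable X : RealHilbert.
Variables (f : X -> R) (g : X -> X) (L : R).
Hypothesis Hf : frechet_grad f g.
Hypothesis HL : L > 0.
Hypothesis Hlip : forall y z : X, hnorm (hsub (g y) (g z)) <= L * hnorm (hsub y z).

Lemma derivable_pt_lim_along_line (u d : X) s0 : d <> hzero ->
  derivable_pt_lim (fun s => f (hadd u (hscal s d))) s0
    (hinner (g (hadd u (hscal s0 d))) d).
Proof.
  intros Hd eps Heps.
  assert (Hnd : 0 < hnorm d).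
  { destruct (hnorm_ge0 _ d) as [| E]; [assumption |].
    symmetry in E. apply hnorm_eq0 in E. contradiction. }
  set (y := hadd u (hscal s0 d)).
  destruct (Hf y (eps / (2 * hnorm d))) as [dl [Hdl Hy]].
  { apply Rdiv_lt_0_compat; lra. }
  assert (Hpos : 0 < dl / hnorm d) by (apply Rdiv_lt_0_compat; lra).
  exists (mkposreal _ Hpos). simpl. intros h Hh0 Hhl.
  rewrite hadd_scal_add. fold y.
  specialize (Hy (hscal h d)). rewrite hnorm_scal, hinner_scal_r in Hy.
  assert (Ha : 0 < Rabs h) by (apply Rabs_pos_lt; assumption).
  assert (Hb : Rabs h * hnorm d < dl).
  { apply (Rmult_lt_compat_r (hnorm d)) in Hhl; [| assumption].
    unfold Rdiv in Hhl. rewrite Rmult_assoc, Rinv_l in Hhl; lra. }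
  assert (Hc : 0 < Rabs h * hnorm d) by (apply Rmult_lt_0_compat; lra).
  specialize (Hy (conj Hc Hb)).
  replace ((f (hadd y (hscal h d)) - f y) / h - hinner (g y) d)
    with ((f (hadd y (hscal h d)) - f y - h * hinner (g y) d) / h)
    by (field; assumption).
  unfold Rdiv. rewrite Rabs_mult, Rabs_inv.
  apply (Rmult_lt_reg_r (Rabs h)); [assumption |].
  rewrite Rmult_assoc, Rinv_l, Rmult_1_r by lra.
  eapply Rle_lt_trans; [apply Hy |].
  replace (eps / (2 * hnorm d) * (Rabs h * hnorm d)) with (eps / 2 * Rabs h)
    by (field; lra).
  nra.
Qed.

Lemma descent_lemma (u d : X) t : 0 <= t ->
  f (hadd u (hscal t d)) <= f u + t * hinner (g u) d + L / 2 * t ^ 2 * hinner d d.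
Proof.
  intros Ht.
  destruct (classic (d = hzero)) as [Hd | Hd].
  { subst. rewrite hscal_0_r, hadd_0, !hinner_0_r. lra. }
  destruct Ht as [Ht | Ht].
  2:{ subst. rewrite hscal_0_l, hadd_0. lra. }
  set (c := hinner (g u) d). set (e := hinner d d).
  destruct (MVT_cor2 (fun s => f (hadd u (hscal s d)) - (s * c + L / 2 * s ^ 2 * e))
              (fun s => hinner (g (hadd u (hscal s d))) d - (c + L * s * e)) 0 t Ht)
    as [s [Hmvt Hs]].
  { intros s _.
    apply (derivable_pt_lim_minus (fun s => f (hadd u (hscal s d)))
             (fun s => s * c + L / 2 * s ^ 2 * e)).
    - apply derivable_pt_lim_along_line, Hd.
    - apply derivable_pt_lim_quadratic. }
  simpl in Hmvt. rewrite hscal_0_l, hadd_0 in Hmvt.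
  assert (Hslope : hinner (hsub (g (hadd u (hscal s d))) (g u)) d <= L * s * e).
  { eapply Rle_trans; [apply Cauchy_Schwarz |].
    pose proof (Hlip (hadd u (hscal s d)) u) as H1.
    rewrite hsub_hadd_l, hnorm_scal, Rabs_pos_eq in H1 by lra.
    assert (e = hnorm d * hnorm d) by (unfold e; rewrite <- hnorm_sqr; ring).
    pose proof (hnorm_ge0 _ d).
    apply Rle_trans with (L * (s * hnorm d) * hnorm d);
      [apply Rmult_le_compat_r |]; nra. }
  rewrite hinner_sub_l in Hslope. fold c in Hslope.
  nra.
Qed.

Lemma armijo_accepts (rho c1 c2 t nu0 : R) (u d : X) :
  rho < 1 -> c2 > 0 ->
  hinner (g u) d <= - c1 * hnorm (g u) ^ 2 -> hnorm d <= c2 * hnorm (g u) ->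
  0 <= t -> t <= armijo_step_bound rho c1 c2 L -> 0 <= nu0 ->
  f (hadd u (hscal t d)) <= f u + rho * t * hinner (g u) d + nu0.
Proof.
  intros Hrho Hc2 Hdir Hd Ht Htm Hnu0.
  pose proof (descent_lemma u d t Ht) as D.
  set (G := hnorm (g u) ^ 2) in *. set (gd := hinner (g u) d) in *.
  assert (HG : 0 <= G) by apply pow2_ge_0.
  assert (Hdd : hinner d d <= c2 ^ 2 * G).
  { rewrite <- hnorm_sqr. unfold G. rewrite <- Rpow_mult_distr.
    apply pow_incr. split; [apply hnorm_ge0 | exact Hd]. }
  assert (Htm' : L * t * c2 ^ 2 <= 2 * (1 - rho) * c1).
  { assert (0 < L * c2 ^ 2) by (apply Rmult_lt_0_compat; [lra | apply pow_lt; lra]).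
    unfold armijo_step_bound in Htm.
    apply (Rmult_le_compat_r (L * c2 ^ 2)) in Htm; [| lra].
    unfold Rdiv in Htm. rewrite Rmult_assoc, Rinv_l in Htm by lra. lra. }
  assert (E1 : (1 - rho) * t * gd <= (1 - rho) * t * (- c1 * G))
    by (apply Rmult_le_compat_l; nra).
  assert (E2 : L / 2 * t ^ 2 * hinner d d <= L / 2 * t ^ 2 * (c2 ^ 2 * G)).
  { apply Rmult_le_compat_l; [| exact Hdd].
    apply Rmult_le_pos; [lra | apply pow2_ge_0]. }
  assert (E3 : t * G * (L * t * c2 ^ 2) <= t * G * (2 * (1 - rho) * c1))
    by (apply Rmult_le_compat_l; nra).
  nra.
Qed.

End LipschitzGradient.

Definition above (u : nat -> R) (eps : R) (k : nat) : bool :=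
  if Rgt_dec (u k) eps then true else false.

Lemma above_true u eps k : above u eps k = true <-> u k > eps.
Proof. unfold above. destruct (Rgt_dec (u k) eps); split; congruence || tauto. Qed.

Definition count_upto (P : nat -> bool) (N : nat) : nat := length (filter P (seq 0 N)).

Lemma count_upto_S P N : count_upto P (S N) = (count_upto P N + if P N then 1 else 0)%nat.
Proof.
  unfold count_upto. rewrite seq_S, filter_app, length_app. simpl.
  destruct (P N); reflexivity.
Qed.

Lemma count_upto_le P N : (count_upto P N <= N)%nat.
Proof. unfold count_upto. rewrite <- (length_seq N 0) at 2. apply filter_length_le. Qed.

Lemma count_upto_mono P N M : (N <= M)%nat -> (count_upto P N <= count_upto P M)%nat.
Proof. induction 1; [lia |]. rewrite count_upto_S. destruct (P m); lia. Qed.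

Lemma count_upto_le_of_decrease (phi : nat -> R) (P : nat -> bool) (k1 : nat) (c lo : R) :
  0 < c ->
  (forall k, (k1 <= k)%nat -> phi (S k) + (if P k then c else 0) <= phi k) ->
  (forall k, lo <= phi k) ->
  forall N, INR (count_upto P N) <= INR k1 + (phi k1 - lo) / c.
Proof.
  intros Hc Hdec Hlo N.
  assert (Htele : forall n,
    phi (k1 + n)%nat + c * (INR (count_upto P (k1 + n)) - INR (count_upto P k1)) <= phi k1).
  { induction n as [| n IH]; [rewrite Nat.add_0_r; lra |].
    rewrite Nat.add_succ_r, count_upto_S, plus_INR.
    pose proof (Hdec (k1 + n)%nat ltac:(lia)).
    destruct (P (k1 + n)%nat); simpl INR; lra. }
  pose proof (Htele N). pose proof (Hlo (k1 + N)%nat).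
  assert (Hmono : INR (count_upto P N) <= INR (count_upto P (k1 + N)))
    by (apply le_INR, count_upto_mono; lia).
  assert (Hk1 : INR (count_upto P k1) <= INR k1) by apply le_INR, count_upto_le.
  assert (INR (count_upto P (k1 + N)) - INR (count_upto P k1) <= (phi k1 - lo) / c).
  { apply (Rmult_le_reg_l c); [exact Hc |].
    unfold Rdiv. rewrite <- Rmult_assoc, Rinv_r_simpl_m by lra. lra. }
  lra.
Qed.

Lemma eventually_false_of_count_bounded (P : nat -> bool) (B : R) :
  (forall N, INR (count_upto P N) <= B) -> exists N, forall k, (N <= k)%nat -> P k = false.
Proof.
  intro Hbound. apply NNPP. intro Hnot.
  assert (Hinf : forall N, exists k, (N <= k)%nat /\ P k = true).
  { intro N. apply NNPP. intro Hk. apply Hnot. exists N. intros k Hk'.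
    destruct (P k) eqn:HPk; [| reflexivity]. exfalso. apply Hk. exists k. split; assumption. }
  assert (Hgrow : forall j, exists N, (j <= count_upto P N)%nat).
  { induction j as [| j [N HN]]; [exists 0%nat; lia |].
    destruct (Hinf N) as [k [HNk HPk]].
    exists (S k). rewrite count_upto_S, HPk.
    pose proof (count_upto_mono P N k HNk). lia. }
  destruct (INR_unbounded B) as [j Hj]. destruct (Hgrow j) as [N HN].
  apply le_INR in HN. pose proof (Hbound N). lra.
Qed.

Section Algorithm1.
Variable X : RealHilbert.
Variables (f : X -> R) (g : X -> X) (alpha0 beta rho L c1 c2 : R).
Variables (x : nat -> X) (alpha : nat -> R) (d : nat -> X).
Variables (nu : nat -> nat -> R) (lk : nat -> nat) (flow : R).
Hypothesis Hf : frechet_grad f g.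
Hypothesis HL : L > 0.
Hypothesis Hlip : forall y z : X, hnorm (hsub (g y) (g z)) <= L * hnorm (hsub y z).
Hypothesis Hlow : forall y : X, f y >= flow.
Hypotheses (Hc1 : c1 > 0) (Hc2 : c2 > 0).
Hypothesis Hdir : forall k, hinner (g (x k)) (d k) <= - c1 * hnorm (g (x k)) ^ 2.
Hypothesis Hdlen : forall k, hnorm (d k) <= c2 * hnorm (g (x k)).
Hypotheses (Halpha0 : alpha0 > 0) (Hbeta : 0 < beta < 1) (Hrho : 0 < rho < 1).
Hypothesis Hstart : alpha 0%nat = alpha0.
Hypothesis Hnu : forall k l, 0 <= nu k l.
Hypothesis Haccepted : forall k, nm_test f g rho beta (x k) (d k) (alpha k) (nu k (lk k)) (lk k).
Hypothesis Hrejected : forall k l, (l < lk k)%nat ->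
  ~ nm_test f g rho beta (x k) (d k) (alpha k) (nu k l) l.
Hypothesis Hiter : forall k, x (S k) = hadd (x k) (hscal (alpha k * beta ^ (lk k)) (d k)).
Hypothesis Hupdate : forall k, alpha (S k) = alpha k * powerRZ beta (Z.of_nat (lk k) - 1).

Let m := armijo_step_bound rho c1 c2 L.
Let kap := kappa_c rho beta alpha0 c1 c2 L.

Lemma armijo_step_bound_pos : 0 < m.
Proof.
  unfold m, armijo_step_bound. apply Rdiv_lt_0_compat; [nra |].
  apply Rmult_lt_0_compat; [lra | apply pow_lt; lra].
Qed.

Lemma rejected_step_gt k l : 0 < alpha k -> (l < lk k)%nat -> m < alpha k * beta ^ l.
Proof.
  intros Hak Hl. apply Rnot_le_lt. intro Hle. apply (Hrejected k l Hl).
  unfold nm_test. rewrite (Rmult_assoc rho).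
  apply armijo_accepts with (L := L) (c1 := c1) (c2 := c2); try lra; auto.
  apply Rmult_le_pos; [lra | apply pow_le; lra].
Qed.

Lemma alpha_ge_min k : Rmin alpha0 m <= alpha k.
Proof.
  pose proof armijo_step_bound_pos.
  induction k as [| k IH].
  { rewrite Hstart. apply Rmin_l. }
  assert (Hak : 0 < alpha k) by (pose proof (Rmin_glb_lt alpha0 m 0); lra).
  rewrite Hupdate. destruct (lk k) as [| j] eqn:Hlk.
  - (* no backtracking: the step is enlarged to alpha k / beta *)
    change (powerRZ beta (Z.of_nat 0 - 1)) with (/ (beta * 1)).
    rewrite Rmult_1_r. apply Rle_trans with (alpha k); [exact IH |].
    rewrite <- (Rmult_1_r (alpha k)) at 1. apply Rmult_le_compat_l; [lra |].
    rewrite <- Rinv_1. apply Rinv_le_contravar; lra.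
  - replace (Z.of_nat (S j) - 1)%Z with (Z.of_nat j) by lia.
    rewrite <- pow_powerRZ.
    apply Rle_trans with m; [apply Rmin_r |].
    apply Rlt_le, rejected_step_gt; [exact Hak | lia].
Qed.

Lemma accepted_step_ge k : beta * Rmin alpha0 m <= alpha k * beta ^ lk k.
Proof.
  pose proof armijo_step_bound_pos.
  pose proof (alpha_ge_min k) as Hk.
  assert (Hmu : 0 < Rmin alpha0 m) by (apply Rmin_glb_lt; lra).
  destruct (lk k) as [| j] eqn:Hlk.
  - simpl. nra.
  - rewrite <- tech_pow_Rmult, <- Rmult_assoc, (Rmult_comm (alpha k)), Rmult_assoc.
    apply Rmult_le_compat_l; [lra |].
    apply Rle_trans with m; [apply Rmin_r |].
    apply Rlt_le, rejected_step_gt; [lra | lia].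
Qed.

Lemma kappa_c_eq : kap = rho * beta * c1 * Rmin alpha0 m.
Proof.
  assert (E : 2 * beta * rho * (1 - rho) * c1 ^ 2 / (L * c2 ^ 2) = rho * beta * c1 * m).
  { unfold m, armijo_step_bound. field. lra. }
  assert (Hp : 0 < rho * beta * c1) by (repeat apply Rmult_lt_0_compat; lra).
  unfold kap, kappa_c. rewrite E.
  replace (rho * beta * alpha0 * c1) with (rho * beta * c1 * alpha0) by ring.
  unfold Rmin.
  destruct (Rle_dec alpha0 m), (Rle_dec (rho * beta * c1 * alpha0) (rho * beta * c1 * m));
    [reflexivity | | | reflexivity]; exfalso; nra.
Qed.

Lemma kappa_c_pos : 0 < kap.
Proof.
  pose proof armijo_step_bound_pos.
  rewrite kappa_c_eq.
  repeat apply Rmult_lt_0_compat; try lra. apply Rmin_glb_lt; lra.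
Qed.

Lemma sufficient_decrease k :
  f (x (S k)) <= f (x k) - kap * hnorm (g (x k)) ^ 2 + nu k (lk k).
Proof.
  pose proof (Haccepted k) as Hk. unfold nm_test in Hk. rewrite <- Hiter in Hk.
  pose proof (accepted_step_ge k) as Ht. pose proof (Hdir k) as Hgd.
  pose proof armijo_step_bound_pos.
  assert (Hmu : 0 < Rmin alpha0 m) by (apply Rmin_glb_lt; lra).
  rewrite kappa_c_eq.
  set (t := alpha k * beta ^ lk k) in *.
  rewrite (Rmult_assoc rho) in Hk. fold t in Hk.
  set (G := hnorm (g (x k)) ^ 2) in *.
  assert (HG : 0 <= G) by apply pow2_ge_0.
  assert (Htpos : 0 <= rho * t).
  { apply Rmult_le_pos; [lra |]. apply Rle_trans with (beta * Rmin alpha0 m); nra. }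
  assert (E1 : rho * t * hinner (g (x k)) (d k) <= rho * t * (- c1 * G))
    by (apply Rmult_le_compat_l; assumption).
  assert (E2 : rho * (beta * Rmin alpha0 m) * (c1 * G) <= rho * t * (c1 * G))
    by (apply Rmult_le_compat_r; nra).
  nra.
Qed.

Lemma f_iter_le_sum_nu n : f (x n) <= f (x 0%nat) + sum_lt (fun i => nu i (lk i)) n.
Proof.
  pose proof kappa_c_pos.
  induction n as [| n IH]; simpl; [lra |].
  pose proof (sufficient_decrease n).
  assert (0 <= kap * hnorm (g (x n)) ^ 2) by (apply Rmult_le_pos; [lra | apply pow2_ge_0]).
  lra.
Qed.

Lemma decrease_where_nu_small k : nu k (lk k) <= kap / 2 * hnorm (g (x k)) ^ 2 ->
  f (x (S k)) + kap / 2 * hnorm (g (x k)) ^ 2 <= f (x k).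
Proof. pose proof (sufficient_decrease k). lra. Qed.

Lemma count_large_gradient_le (k1 : nat) eps :
  (forall k, (k >= k1)%nat -> nu k (lk k) <= kap / 2 * hnorm (g (x k)) ^ 2) ->
  eps > 0 ->
  forall N, INR (count_upto (above (fun k => hnorm (g (x k))) eps) N) <=
    INR k1 + (f (x 0%nat) - flow + sum_lt (fun i => nu i (lk i)) k1) / (kap / 2 * eps ^ 2).
Proof.
  intros Hk1 Heps N.
  pose proof kappa_c_pos.
  assert (Hc : 0 < kap / 2 * eps ^ 2) by (apply Rmult_lt_0_compat; [lra | apply pow_lt; lra]).
  eapply Rle_trans.
  - apply (count_upto_le_of_decrease (fun k => f (x k)) _ k1 _ flow Hc).
    + intros k Hk. pose proof (decrease_where_nu_small k (Hk1 k Hk)).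
      destruct (above _ eps k) eqn:Hgt; [| nra].
      apply above_true in Hgt. pose proof (hnorm_ge0 _ (g (x k))).
      assert (eps ^ 2 <= hnorm (g (x k)) ^ 2) by (apply pow_incr; lra).
      nra.
    + intro k. apply Rge_le, Hlow.
  - pose proof (f_iter_le_sum_nu k1).
    apply Rplus_le_compat_l, Rmult_le_compat_r; [apply Rlt_le, Rinv_0_lt_compat, Hc | lra].
Qed.

End Algorithm1.

Theorem lemma3 (X : RealHilbert) (f : X -> R) (g : X -> X)
  (alpha0 beta rho L flow c1 c2 : R)
  (x : nat -> X) (alpha : nat -> R) (d : nat -> X)
  (nu : nat -> nat -> R) (lk : nat -> nat)
  (Hf : frechet_grad f g)
  (Halg : algorithm1 f g alpha0 beta rho x alpha d nu lk)
  (* A1 *)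
  (HL : L > 0) (HA1 : forall y z : X, hnorm (hsub (g y) (g z)) <= L * hnorm (hsub y z))
  (* A2 *)
  (HA2 : forall y : X, f y >= flow)
  (* A3 *)
  (Hc1 : c1 > 0) (Hc2 : c2 > 0)
  (HA3a : forall k, hinner (g (x k)) (d k) <= - c1 * hnorm (g (x k)) ^ 2)
  (HA3b : forall k, hnorm (d k) <= c2 * hnorm (g (x k)))
  (* A4' with nu_k := nu_{k, l_k} *)
  (HA4 : forall delta, delta > 0 -> exists n, forall k, (k >= n)%nat ->
           nu k (lk k) <= delta * hnorm (g (x k)) ^ 2)
  (* k1 = n_0(kappa_c / 2): the least n with the A4' property for delta = kappa_c/2 *)
  (k1 : nat)
  (Hk1 : forall k, (k >= k1)%nat ->
           nu k (lk k) <= kappa_c rho beta alpha0 c1 c2 L / 2 * hnorm (g (x k)) ^ 2)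
  (Hk1min : forall n, (n < k1)%nat -> ~ (forall k, (k >= n)%nat ->
           nu k (lk k) <= kappa_c rho beta alpha0 c1 c2 L / 2 * hnorm (g (x k)) ^ 2)) :
  forall eps, eps > 0 ->
    exists Omega : list nat,
      NoDup Omega /\
      (forall k, In k Omega <-> hnorm (g (x k)) > eps) /\
      INR (length Omega) <=
        INR k1 + (2 * (f (x 0%nat) - flow + sum_lt (fun i => nu i (lk i)) k1)
                   / kappa_c rho beta alpha0 c1 c2 L) * / eps ^ 2.
Proof.
  destruct Halg as (Halpha0 & Hbeta & Hrho & Hstart & _ & Hnu & Hacc & Hrej & Hiter & Hupd).
  intros eps Heps.
  set (Omega_eps := above (fun k => hnorm (g (x k))) eps).
  pose proof (count_large_gradient_le X f g alpha0 beta rho L c1 c2 x alpha d nu lk flow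
                Hf HL HA1 HA2 Hc1 Hc2 HA3a HA3b Halpha0 Hbeta Hrho Hstart Hnu Hacc Hrej
                Hiter Hupd k1 eps Hk1 Heps) as Hcount.
  destruct (eventually_false_of_count_bounded Omega_eps _ Hcount) as [N HN].
  exists (filter Omega_eps (seq 0 N)). split; [| split].
  - apply NoDup_filter, seq_NoDup.
  - intro k.
    rewrite filter_In, in_seq, <- (above_true (fun k => hnorm (g (x k))) eps k).
    split; [tauto |].
    intro Hk. split; [| exact Hk]. destruct (Nat.lt_ge_cases k N); [lia |].
    rewrite HN in Hk by assumption. discriminate.
  - eapply Rle_trans; [apply (Hcount N) |]. apply Req_le. f_equal.
    assert (0 < kappa_c rho beta alpha0 c1 c2 L) by
      exact (kappa_c_pos alpha0 beta rho L c1 c2 HL Hc1 Hc2 Halpha0 Hbeta Hrho).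
    field. lra.
Qed.
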